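(* Let $G$ be a maximal triangle-free graph satisfying property $\mathscr{D}_3$. If $G$ contains an induced cycle of length six, then $G$ contains the Mycielski–Grötzsch graph $\Upsilon$ as a subgraph.
   Context: A graph is maximal triangle-free if it contains no triangle but adding any new edge creates a triangle. Property $\mathscr{D}_k$: for every $m\in\{1,\dots,k\}$ and every sequence $x_1,\dots,x_{3m}$ of (not necessarily distinct) vertices there is a vertex $y$ with $|\{i\in[3m]: x_iy\in E(G)\}|\ge m+1$. Mycielski–Grötzsch graph $\Upsilon$: vertices $a_j,b_j$ ($j\in\mathbb Z/5\mathbb Z$) and $c$; edges all pairs $a_jc$, $a_jb_{j\pm2}$, $b_jb_{j+2}$. *)

From mathcomp Require Import all_boot.
Set Implicit Arguments. Unset Strict Implicit. Unset Printing Implicit Defensive.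

Definition simple_graph (T : finType) (e : rel T) : Prop :=
  symmetric e /\ irreflexive e.

Definition triangle_free (T : finType) (e : rel T) : Prop :=
  forall x y z : T, ~ [&& e x y, e y z & e x z].

Definition maximal_triangle_free (T : finType) (e : rel T) : Prop :=
  triangle_free e /\
  forall x y : T, x != y -> ~~ e x y -> exists z : T, e x z && e z y.

Definition property_D (k : nat) (T : finType) (e : rel T) : Prop :=
  forall m : nat, 1 <= m <= k ->
  forall x : 'I_(3 * m) -> T,
  exists y : T, m.+1 <= #|[set i : 'I_(3 * m) | e (x i) y]|.

Definition has_induced_C6 (T : finType) (e : rel T) : Prop :=
  exists f : 'I_6 -> T, injective f /\
    forall i j : 'I_6,
      e (f i) (f j) = (val j == (val i).+1 %% 6) || (val i == (val j).+1 %% 6).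

(* The Mycielski–Grötzsch graph Upsilon.
   Vertices: Some (inl j) = a_j, Some (inr j) = b_j (j in Z/5Z), None = c.
   Edges: a_j c, a_j b_{j±2}, b_j b_{j+2}. *)
Definition upsilon_vertex : finType := option ('I_5 + 'I_5).

Definition plus2 (j k : 'I_5) : bool := val k == (val j + 2) %% 5.

Definition upsilon_edge (u v : upsilon_vertex) : bool :=
  match u, v with
  | Some (inl _), None => true
  | None, Some (inl _) => true
  | Some (inl j), Some (inr k) => plus2 j k || plus2 k j
  | Some (inr k), Some (inl j) => plus2 j k || plus2 k j
  | Some (inr j), Some (inr k) => plus2 j k || plus2 k j
  | _, _ => false
  end.

Definition contains_subgraph (U : finType) (eH : rel U) (T : finType) (e : rel T) : Prop :=
  exists f : U -> T, injective f /\ forall u v : U, eH u v -> e (f u) (f v).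

From mathcomp Require Import all_boot.
Set Implicit Arguments. Unset Strict Implicit. Unset Printing Implicit Defensive.

(* Write v0,...,v5 for the induced hexagon.  By D_2 some y sees three of its
   vertices, necessarily an alternate triple, say v0, v2, v4.  By maximality the
   antipodal pairs v_i, v_{i+3} have common neighbours z_i, and by D_3 some w
   sees four of the nine vertices v_i, z_i; triangle-freeness forces these to be
   v_i, v_{i+3}, z_{i+1}, z_{i+2}, say v0, v3, z1, z2.  The six vertices
   v1, v2, z2, v5, v4, z1 form another hexagon; a vertex u given by D_2 seeing an
   alternate triple of it, together with y, w, z1, z2 and the v_i, spans a copy
   of Upsilon.  The copy is automatically injective: any two distinct vertices
   of Upsilon are joined by a walk of length 1 or 3, so identifying them in a
   triangle-free graph would create a loop or a triangle. *)

Lemma cycle6_independent_alternate (A : Type) (P : pred A) (x0 x1 x2 x3 x4 x5 : A) :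
  ~~ (P x0 && P x1) -> ~~ (P x1 && P x2) -> ~~ (P x2 && P x3) ->
  ~~ (P x3 && P x4) -> ~~ (P x4 && P x5) -> ~~ (P x5 && P x0) ->
  3 <= count P [:: x0; x1; x2; x3; x4; x5] ->
  [&& P x0, P x2 & P x4] || [&& P x1, P x3 & P x5].
Proof.
rewrite /=; case: (P x0) (P x1) (P x2) (P x3) (P x4) (P x5);
by move=> [] [] [] [] [].
Qed.

Lemma hexagon_antipodes_independent (A : Type) (P : pred A)
    (x0 x1 x2 x3 x4 x5 z0 z1 z2 : A) :
  ~~ (P x0 && P x1) -> ~~ (P x1 && P x2) -> ~~ (P x2 && P x3) ->
  ~~ (P x3 && P x4) -> ~~ (P x4 && P x5) -> ~~ (P x5 && P x0) ->
  ~~ (P x0 && P z0) -> ~~ (P x3 && P z0) -> ~~ (P x1 && P z1) ->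
  ~~ (P x4 && P z1) -> ~~ (P x2 && P z2) -> ~~ (P x5 && P z2) ->
  4 <= count P [:: x0; x1; x2; x3; x4; x5; z0; z1; z2] ->
  [|| [&& P x0, P x3, P z1 & P z2], [&& P x1, P x4, P z2 & P z0]
    | [&& P x2, P x5, P z0 & P z1]].
Proof.
rewrite /=; case: (P x0) (P x1) (P x2) (P x3) (P x4) (P x5) (P z0) (P z1) (P z2);
by move=> [] [] [] [] [] [] [] [].
Qed.

Definition upsilon_ords : seq 'I_5 :=
  [:: @Ordinal 5 0 isT; @Ordinal 5 1 isT; @Ordinal 5 2 isT; @Ordinal 5 3 isT;
      @Ordinal 5 4 isT].

(* Unlike [enum upsilon_vertex], this list reduces, so finite properties of
   Upsilon can be checked by computation. *)
Definition upsilon_vertices : seq upsilon_vertex :=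
  None :: [seq Some (inl j) | j <- upsilon_ords] ++ [seq Some (inr j) | j <- upsilon_ords].

Lemma mem_upsilon_vertices (u : upsilon_vertex) : u \in upsilon_vertices.
Proof. by case: u => [[] [] [|[|[|[|[|j]]]]] //|]. Qed.

Lemma upsilon_short_odd_walk (u w : upsilon_vertex) : u != w ->
  upsilon_edge u w \/
  exists z z', [&& upsilon_edge u z, upsilon_edge z z' & upsilon_edge z' w].
Proof.
have all_walks : all (fun u => all (fun w => [|| u == w, upsilon_edge u w |
    has (fun z => has (fun z' => [&& upsilon_edge u z, upsilon_edge z z' & upsilon_edge z' w])
      upsilon_vertices) upsilon_vertices]) upsilon_vertices) upsilon_vertices.
  by [].
move=> /negPf neq_uw.
have /allP/(_ w (mem_upsilon_vertices w)) :=
  allP all_walks u (mem_upsilon_vertices u).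
rewrite neq_uw orFb => /orP[-> | /hasP[z _ /hasP[z' _ walk]]]; first by left.
by right; exists z, z'.
Qed.

Definition upsilon_map (T : Type) (c a0 a1 a2 a3 a4 b0 b1 b2 b3 b4 : T)
    (u : upsilon_vertex) : T :=
  match u with
  | None => c
  | Some (inl j) => nth c [:: a0; a1; a2; a3; a4] j
  | Some (inr j) => nth c [:: b0; b1; b2; b3; b4] j
  end.

Section TriangleFreeGraph.

Variables (T : finType) (e : rel T).
Hypotheses (e_sym : symmetric e) (e_irr : irreflexive e) (e_tf : triangle_free e).

Lemma adj_nbr_disjoint (u v w : T) : e u v -> ~~ (e u w && e v w).
Proof.
by move=> e_uv; apply/negP => /andP[e_uw e_vw]; apply: (@e_tf u v w); rewrite e_uv e_vw e_uw.
Qed.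

Lemma triangle_free_hom_injective (U : eqType) (eH : rel U) (f : U -> T) :
  (forall u w, eH u w -> e (f u) (f w)) ->
  (forall u w, u != w -> eH u w \/ exists z z', [&& eH u z, eH z z' & eH z' w]) ->
  injective f.
Proof.
move=> f_hom walk u w f_uw; case: (eqVneq u w) => // /walk[/f_hom | [z [z' /and3P[]]]].
  by rewrite f_uw e_irr.
move=> /f_hom e_uz /f_hom e_zz' /f_hom; rewrite -f_uw e_sym => e_uz'.
by exfalso; apply: (@e_tf (f u) (f z) (f z')); rewrite e_uz e_zz' e_uz'.
Qed.

Lemma property_D_count (k m : nat) (s : (3 * m).-tuple T) :
  property_D k e -> 1 <= m <= k -> exists y, m < count (e^~ y) s.
Proof.
move=> e_D m_k; have [y card_y] := e_D m m_k (tnth s); exists y.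
suff -> : count (e^~ y) s = #|[set i | e (tnth s i) y]| by [].
by rewrite cardsE cardE /enum_mem -enumT size_filter -[in LHS](map_tnth_enum s) count_map.
Qed.

Lemma hexagon_nbr_alternate (v0 v1 v2 v3 v4 v5 y : T) :
  cycle e [:: v0; v1; v2; v3; v4; v5] -> 3 <= count (e^~ y) [:: v0; v1; v2; v3; v4; v5] ->
  [&& e v0 y, e v2 y & e v4 y] || [&& e v1 y, e v3 y & e v5 y].
Proof.
case/and5P=> ? ? ? ? /and3P[? ? _].
by apply: cycle6_independent_alternate => //; apply: adj_nbr_disjoint.
Qed.

Lemma hexagon_antipodes_nbr (v0 v1 v2 v3 v4 v5 z0 z1 z2 w : T) :
  cycle e [:: v0; v1; v2; v3; v4; v5] ->
  e v0 z0 -> e v3 z0 -> e v1 z1 -> e v4 z1 -> e v2 z2 -> e v5 z2 ->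
  4 <= count (e^~ w) [:: v0; v1; v2; v3; v4; v5; z0; z1; z2] ->
  [|| [&& e v0 w, e v3 w, e z1 w & e z2 w], [&& e v1 w, e v4 w, e z2 w & e z0 w]
    | [&& e v2 w, e v5 w, e z0 w & e z1 w]].
Proof.
case/and5P=> ? ? ? ? /and3P[? ? _] ? ? ? ? ? ?.
by apply: hexagon_antipodes_independent => //; apply: adj_nbr_disjoint.
Qed.

Lemma upsilon_of_hexagon (v0 v1 v2 v3 v4 v5 y x1 x2 p q : T) :
  cycle e [:: v0; v1; v2; v3; v4; v5] -> e v0 y -> e v2 y -> e v4 y ->
  e v0 x1 -> e v3 x1 -> e v0 x2 -> e v3 x2 -> e v1 p -> e v4 p -> e v2 q -> e v5 q ->
  e x1 p -> e p q -> e q x2 ->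
  contains_subgraph upsilon_edge e.
Proof.
case/and5P=> ? ? ? ? /and3P[? ? _] *.
pose f := upsilon_map v0 y v1 x1 x2 v5 v3 q v4 v2 p.
have f_hom u w : upsilon_edge u w -> e (f u) (f w).
  case: u => [[] [] [|[|[|[|[|?]]]]] // ? |]; case: w => [[] [] [|[|[|[|[|?]]]]] // ? |];
  by rewrite //= e_sym.
by exists f; split=> //; apply: triangle_free_hom_injective f_hom upsilon_short_odd_walk.
Qed.

Lemma maximal_triangle_free_common_nbr (u w : T) :
  maximal_triangle_free e -> u != w -> ~~ e u w -> exists2 z, e u z & e w z.
Proof.
by move=> [_ e_max] /e_max/[apply] -[z /andP[e_uz e_zw]]; exists z; rewrite // e_sym.
Qed.

Hypothesis e_D3 : property_D 3 e.

Lemma upsilon_of_hexagon_hub (v0 v1 v2 v3 v4 v5 y w z1 z2 : T) :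
  cycle e [:: v0; v1; v2; v3; v4; v5] -> e v0 y -> e v2 y -> e v4 y ->
  e v0 w -> e v3 w -> e v1 z1 -> e v4 z1 -> e v2 z2 -> e v5 z2 -> e z1 w -> e z2 w ->
  contains_subgraph upsilon_edge e.
Proof.
move=> hex v0y v2y v4y v0w v3w v1z1 v4z1 v2z2 v5z2 z1w z2w.
have hex' : cycle e [:: v1; v2; z2; v5; v4; z1].
  case/and5P: hex => _ e12 _ _ /and3P[e45 _ _].
  by rewrite /= e12 v2z2 v4z1 (e_sym z2) v5z2 (e_sym v5) e45 (e_sym z1) v1z1.
have hex2 : cycle e [:: v2; v3; v4; v5; v0; v1] by rewrite -(rot_cycle 2) in hex.
have hex4 : cycle e [:: v4; v5; v0; v1; v2; v3] by rewrite -(rot_cycle 4) in hex.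
have [u] := property_D_count (m := 2) [tuple v1; v2; z2; v5; v4; z1] e_D3 isT.
move/(hexagon_nbr_alternate hex')/orP => -[] /and3P[? ? ?].
- by apply: (@upsilon_of_hexagon v4 v5 v0 v1 v2 v3 y u z1 z2 w); rewrite // e_sym.
- by apply: (@upsilon_of_hexagon v2 v3 v4 v5 v0 v1 y z2 u w z1); rewrite // e_sym.
Qed.

Lemma upsilon_of_hexagon_antipodes (v0 v1 v2 v3 v4 v5 y z0 z1 z2 : T) :
  cycle e [:: v0; v1; v2; v3; v4; v5] -> e v0 y -> e v2 y -> e v4 y ->
  e v0 z0 -> e v3 z0 -> e v1 z1 -> e v4 z1 -> e v2 z2 -> e v5 z2 ->
  contains_subgraph upsilon_edge e.
Proof.
move=> hex v0y v2y v4y v0z0 v3z0 v1z1 v4z1 v2z2 v5z2.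
have hex2 : cycle e [:: v2; v3; v4; v5; v0; v1] by rewrite -(rot_cycle 2) in hex.
have hex4 : cycle e [:: v4; v5; v0; v1; v2; v3] by rewrite -(rot_cycle 4) in hex.
have [w] := property_D_count (m := 3) [tuple v0; v1; v2; v3; v4; v5; z0; z1; z2]
  e_D3 isT.
move/(hexagon_antipodes_nbr hex v0z0 v3z0 v1z1 v4z1 v2z2 v5z2)/or3P.
case=> /and4P[? ? ? ?].
- exact: (@upsilon_of_hexagon_hub v0 v1 v2 v3 v4 v5 y w z1 z2).
- exact: (@upsilon_of_hexagon_hub v4 v5 v0 v1 v2 v3 y w z2 z0).
- exact: (@upsilon_of_hexagon_hub v2 v3 v4 v5 v0 v1 y w z0 z1).
Qed.

End TriangleFreeGraph.

Theorem lemma3p1 (T : finType) (e : rel T) :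
  simple_graph e ->
  maximal_triangle_free e ->
  property_D 3 e ->
  has_induced_C6 e ->
  contains_subgraph upsilon_edge e.
Proof.
move=> [e_sym e_irr] e_mtf e_D3 [f [f_inj f_adj]].
have e_tf := e_mtf.1.
pose v k := f (inord k).
have v_adj k l : k < 6 -> l < 6 -> e (v k) (v l) = (l == k.+1 %% 6) || (k == l.+1 %% 6).
  by move=> lt_k6 lt_l6; rewrite f_adj /= !inordK.
have v_eq k l : k < 6 -> l < 6 -> (v k == v l) = (k == l).
  by move=> lt_k6 lt_l6; rewrite (inj_eq f_inj) -val_eqE /= !inordK.
have hex : cycle e [:: v 0; v 1; v 2; v 3; v 4; v 5] by rewrite /= !v_adj.
have antipode k : k < 3 -> exists2 z, e (v k) z & e (v (k + 3)) z.
  by case: k => [|[|[|//]]] _; apply: maximal_triangle_free_common_nbr; rewrite ?v_eq ?v_adj.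
have [z0 v0z0 v3z0] := antipode 0 isT.
have [z1 v1z1 v4z1] := antipode 1 isT.
have [z2 v2z2 v5z2] := antipode 2 isT.
have [y] := property_D_count (m := 2) [tuple v 0; v 1; v 2; v 3; v 4; v 5] e_D3 isT.
move/(hexagon_nbr_alternate e_tf hex)/orP => -[] /and3P[? ? ?].
- exact: (upsilon_of_hexagon_antipodes e_sym e_irr e_tf e_D3 hex (y := y) (z0 := z0)
    (z1 := z1) (z2 := z2)).
- have hex1 : cycle e [:: v 1; v 2; v 3; v 4; v 5; v 0] by rewrite -(rot_cycle 1) in hex.
  exact: (upsilon_of_hexagon_antipodes e_sym e_irr e_tf e_D3 hex1 (y := y) (z0 := z1)
    (z1 := z2) (z2 := z0)).
Qed.
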